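(* Let $\imath:V\hookrightarrow U$ be an inclusion of regular molecules with $\dim V=\dim U=1$. Then $\imath$ is a submolecule inclusion.
   Context: All posets are finite; $y$ covers $x$ if $x<y$ with nothing strictly between. A finite poset is graded if for each $x$ all maximal covering chains descending from $x$ have the same length $\dim x$; $U_n$ denotes elements of dimension $n$. An oriented graded poset is a finite graded poset with a label $\pm$ on each covering pair; $\Delta^\alpha x$ ($\nabla^\alpha x$) is the set of elements covered by (covering) $x$ with label $\alpha$. For closed (downward closed) $U$, with $\mathrm{cl}$ downward closure, $\max U$ maximal elements, $\dim U$ maximal dimension: $\Delta^\alpha_nU=\{x\in U_n:\nabla^{-\alpha}x\cap U=\emptyset\}$, $\partial^\alpha_nU=\mathrm{cl}(\Delta^\alpha_nU)\cup\bigcup_{k<n}\mathrm{cl}((\max U)_k)$ ($\emptyset$ for $n<0$), $\partial_nU=\partial^-_nU\cup\partial^+_nU$, subscript omitted for $n=\dim U-1$. Maps are functions with $f(\partial^\alpha_n\mathrm{cl}\{x\})=\partial^\alpha_n\mathrm{cl}\{f(x)\}$; inclusions are injective maps. $U\#_kV$ is the pushout of $U\hookleftarrow\partial^+_kU\cong\partial^-_kV\hookrightarrow V$; for $U,V$ of equal dimension $n$ with $\partial U\cong\partial V$ compatibly with $\partial^\pm$, $U\Rightarrow V$ is that pushout with a new element $\top$ of dimension $n+1$, $\Delta^-\top=U_n$, $\Delta^+\top=V_n$. $U$ is round if $\partial^-_nU\cap\partial^+_nU=\partial_{n-1}U$ for all $n<\dim U$. Regular molecules: smallest isomorphism-closed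 class containing the point, closed under $U\#_kV$ ($k<\min(\dim U,\dim V)$) and $U\Rightarrow V$ for round regular molecules of equal dimension. Submolecule inclusions: smallest class of inclusions of regular molecules containing all isomorphisms and the inclusions $U\hookrightarrow U\#_kV\hookleftarrow V$, closed under composition. *)

From HB Require Import structures.
From mathcomp Require Import all_boot all_order all_algebra.

Set Implicit Arguments.
Unset Strict Implicit.
Unset Printing Implicit Defensive.
Import Order.TTheory GRing.Theory Num.Theory.

(* An oriented graded poset, presented by its (finite) set of elements, its
   covering relation [cov x y] ("y covers x"), the orientation label [ori x y]
   of a covering pair (true = +, false = -; meaningless on non-covering pairs)
   and its dimension function.  The two axioms say exactly that the reflexive
   transitive closure of [cov] is a finite poset whose covering relation is
   [cov], which is graded with dimension function [dimf]: every maximal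
   descending covering chain from x has length [dimf x]. *)
Record ogp := OGP {
  pt :> finType;
  cov : rel pt;
  ori : pt -> pt -> bool;
  dimf : pt -> nat;
  dimf_cov : forall x y, cov x y -> dimf y = (dimf x).+1;
  dimf_min : forall x, (0 < dimf x)%N -> exists y, cov y x }.

Arguments cov {o}.
Arguments ori {o}.
Arguments dimf {o}.

Section Boundaries.
Variable P : ogp.

Definition le (x y : P) : bool := connect (@cov P) x y.
Definition lt (x y : P) : bool := (x != y) && le x y.

Definition closed (A : {set P}) : Prop :=
  forall x y, y \in A -> le x y -> x \in A.

Definition cl (A : {set P}) : {set P} := [set x | [exists y in A, le x y]].

Definition maxel (A : {set P}) : {set P} :=
  [set x in A | [forall y in A, ~~ lt x y]].

Definition dimset (A : {set P}) : int :=
  if A == set0 then (-1)%R else Posz (\max_(x in A) dimf x).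

Definition Delta (a : bool) (n : int) (A : {set P}) : {set P} :=
  [set x in A | (Posz (dimf x) == n) &&
     [forall y in A, ~~ (cov x y && (ori x y == ~~ a))]].

Definition bd (a : bool) (n : int) (A : {set P}) : {set P} :=
  if (n < 0)%R then set0
  else cl (Delta a n A) :|: cl [set x in maxel A | (Posz (dimf x) < n)%R].

Definition bd2 (n : int) (A : {set P}) : {set P} := bd false n A :|: bd true n A.

Definition ogp_dim : int := dimset [set: P].

Definition round : Prop :=
  forall n : int, (n < ogp_dim)%R ->
    bd false n [set: P] :&: bd true n [set: P] = bd2 (n - 1) [set: P].

End Boundaries.

Section Maps.
Variables P Q : ogp.

Definition is_map (f : P -> Q) : Prop :=
  forall (x : P) (a : bool) (n : int),
    f @: bd a n (cl [set x]) = bd a n (cl [set f x]).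

Definition inclusion (f : P -> Q) : Prop := is_map f /\ injective f.

(* f is an isomorphism of P onto the (closed) subset B of Q with its
   induced oriented graded poset structure *)
Definition iso_onto (f : P -> Q) (B : {set Q}) : Prop :=
  [/\ injective f,
      (forall x, f x \in B),
      (forall y, y \in B -> exists x, f x = y),
      (forall x y, cov (f x) (f y) = cov x y) &
      (forall x y, cov x y -> ori (f x) (f y) = ori x y)].

Definition iso (f : P -> Q) : Prop := iso_onto f [set: Q].

End Maps.

(* W (with coprojections i, j) is the pasting U #_k V, i.e. the pushout of
   U <- d^+_k U ~ d^-_k V -> V: W is the union of two closed subsets A, B,
   isomorphic to U and V respectively, meeting exactly in d^+_k A = d^-_k B. *)
Definition is_paste (k : nat) (U V W : ogp) (i : U -> W) (j : V -> W) : Prop :=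
  exists A B : {set W},
    closed A /\ closed B /\ A :|: B = [set: W] /\
    A :&: B = bd true (Posz k) A /\ A :&: B = bd false (Posz k) B /\
    iso_onto i A /\ iso_onto j B.

(* W is U => V (with n = dim U = dim V): W \ {top} is the pushout of
   U <- dU ~ dV -> V, the isomorphism of boundaries being compatible with
   d^- and d^+, and top covers exactly the n-dimensional elements, with
   label - on those of (the copy of) U and + on those of (the copy of) V. *)
Definition is_atom (U V W : ogp) (i : U -> W) (j : V -> W) : Prop :=
  exists (top : W) (A B : {set W}),
    let n := ogp_dim U in
    closed A /\ closed B /\ A :|: B = [set: W] :\ top /\
    A :&: B = bd2 (n - 1) A /\
    bd false (n - 1) A = bd false (n - 1) B /\
    bd true (n - 1) A = bd true (n - 1) B /\
    iso_onto i A /\ iso_onto j B /\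
    (forall x, cov x top = (x != top) && (Posz (dimf x) == n)) /\
    (forall x, x \in A -> cov x top -> ori x top = false) /\
    (forall x, x \in B -> cov x top -> ori x top = true) /\
    (forall y, ~~ cov top y).

Inductive regmol : ogp -> Prop :=
| rm_point (P : ogp) : #|P| = 1%N -> regmol P
| rm_iso (P Q : ogp) (f : P -> Q) : regmol P -> iso f -> regmol Q
| rm_paste (U V W : ogp) (k : nat) (i : U -> W) (j : V -> W) :
    regmol U -> regmol V ->
    (Posz k < ogp_dim U)%R -> (Posz k < ogp_dim V)%R ->
    is_paste k i j -> regmol W
| rm_atom (U V W : ogp) (i : U -> W) (j : V -> W) :
    regmol U -> regmol V -> round U -> round V ->
    ogp_dim U = ogp_dim V -> is_atom i j -> regmol W.

Inductive sub_incl : forall U W : ogp, (U -> W) -> Prop :=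
| si_iso (U W : ogp) (f : U -> W) :
    regmol U -> regmol W -> iso f -> sub_incl f
| si_left (U V W : ogp) (k : nat) (i : U -> W) (j : V -> W) :
    regmol U -> regmol V ->
    (Posz k < ogp_dim U)%R -> (Posz k < ogp_dim V)%R ->
    is_paste k i j -> sub_incl i
| si_right (U V W : ogp) (k : nat) (i : U -> W) (j : V -> W) :
    regmol U -> regmol V ->
    (Posz k < ogp_dim U)%R -> (Posz k < ogp_dim V)%R ->
    is_paste k i j -> sub_incl j
| si_comp (U V W : ogp) (f : U -> V) (g : V -> W) :
    sub_incl f -> sub_incl g -> sub_incl (g \o f).

From mathcomp Require Import all_boot all_order all_algebra.
From mathcomp Require Import zify.
From Stdlib Require Import FunctionalExtensionality.

Set Implicit Arguments.
Unset Strict Implicit.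
Unset Printing Implicit Defensive.

(* A regular molecule whose elements have dimension at most 1 is isomorphic to
   a chain of m edges: by induction on its construction, a pasting of such
   molecules is along a 0-boundary and concatenates two chains, and the only
   atom of dimension 1 is a single edge.  An inclusion of a chain of k > 0 edges
   into a chain of m edges sends the input and output vertex of each edge to
   those of an edge, so it translates the chain by 2s for some s with
   s + k <= m; this translation is the composite of the coprojections
   chain k -> chain k #_0 chain r -> chain s #_0 (chain k #_0 chain r). *)

Section OgpFacts.
Variable P : ogp.
Implicit Types (x y : P) (S : {set P}).

Lemma cov_irr x : cov x x = false.
Proof. by apply/negP => /dimf_cov; lia. Qed.

Lemma cov_dimf_neq x y : dimf y != (dimf x).+1 -> cov x y = false.
Proof. by apply: contraNF => /dimf_cov ->. Qed.

Lemma path_dimf x p : path cov x p -> dimf (last x p) = dimf x + size p.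
Proof.
elim: p x => [|z p IH] x /=; first by rewrite addn0.
by case/andP=> /dimf_cov xz /IH ->; rewrite xz addSnnS.
Qed.

Lemma le_dimf x y : le x y -> x = y \/ dimf x < dimf y.
Proof.
case/connectP=> [[|z p] xp ->]; [by left | right].
by rewrite path_dimf //= addnS ltnS leq_addr.
Qed.

Definition dim_le1 : Prop := forall x : P, dimf x <= 1.

Lemma dim_le1_leE (lP : dim_le1) x y : le x y = (x == y) || cov x y.
Proof.
apply/idP/orP => [/connectP[[|z [|w p]] /= xp ->] | [/eqP -> | /connect1 //]].
- by left.
- by right; case/andP: xp.
- by case/and3P: xp => /dimf_cov xz /dimf_cov zw; have := lP w; rewrite zw xz.
- exact: connect0.
Qed.

Lemma cl_set1 x : cl [set x] = [set y | le y x].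
Proof.
apply/setP=> y; rewrite !inE; apply/existsP/idP => [[z /andP[]] | yx].
  by rewrite inE => /eqP ->.
by exists x; rewrite inE eqxx.
Qed.

Lemma bd_neg a (n : int) S : (n < 0)%R -> bd a n S = set0.
Proof. by rewrite /bd => ->. Qed.

Lemma bd0E a S : bd a 0 S = Delta a 0 S.
Proof.
rewrite /bd /=.
have -> : [set x in maxel S | (Posz (dimf x) < 0)%R] = set0.
  by apply/setP => x; rewrite !inE andbF.
apply/setP => y; rewrite inE [y \in cl set0]inE.
have -> : [exists z in set0, le y z] = false by apply/existsP => -[z]; rewrite inE.
rewrite orbF inE; apply/existsP/idP => [[z /andP[zD yz]] | yD]; last first.
  by exists y; rewrite yD; apply: connect0.
have dz : dimf z = 0 by move: zD; rewrite inE => /and3P[_ /eqP[]].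
by case: (le_dimf yz) => [-> // | ]; rewrite dz.
Qed.

Lemma closedT : closed [set: P].
Proof. by move=> x y _ _; rewrite in_setT. Qed.

Lemma ogp_dimE (d : nat) :
  (forall x, dimf x <= d) -> (exists x, dimf x = d) -> ogp_dim P = d.
Proof.
move=> led [x dx]; rewrite /ogp_dim /dimset.
have /negbTE -> : [set: P] != set0 by apply/set0Pn; exists x.
congr Posz; apply/eqP; rewrite eqn_leq; apply/andP; split.
  by apply/bigmax_leqP => y _.
by rewrite -dx (leq_bigmax_cond _ (in_setT x)).
Qed.

Lemma ogp_dimP (d : nat) :
  ogp_dim P = d -> (forall x, dimf x <= d) /\ exists x, dimf x = d.
Proof.
rewrite /ogp_dim /dimset; case: ifP => // nz [<-]; split.
  by move=> x; rewrite (leq_bigmax_cond _ (in_setT x)).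
have : 0 < #|[set: P]| by rewrite card_gt0 nz.
by case/(eq_bigmax_cond (fun x => dimf x)) => x _ ->; exists x.
Qed.

Lemma ogp_dim_le (d : nat) : (forall x, dimf x <= d) -> (ogp_dim P <= d)%R.
Proof.
by move=> led; rewrite /ogp_dim /dimset; case: ifP => // _; rewrite lez_nat; apply/bigmax_leqP.
Qed.

End OgpFacts.

Section Isomorphisms.
Variables P Q : ogp.
Implicit Types (h : P -> Q) (B : {set Q}).

Lemma iso_onto_dimf h B : iso_onto h B -> closed B -> forall x, dimf (h x) = dimf x.
Proof.
case=> _ hB onto hcov _ clB x; move dx: (dimf x) => n; elim: n x dx => [|n IH] x dx.
  case dhx: (dimf (h x)) => [//|d].
  have [y yhx] : exists y, cov y (h x) by apply: dimf_min; rewrite dhx.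
  have [z hz] := onto y (clB y (h x) (hB x) (connect1 yhx)).
  by move: yhx; rewrite -hz hcov => /dimf_cov; rewrite dx.
have [y yx] : exists y, cov y x by apply: dimf_min; rewrite dx.
have dy : dimf y = n by move: (dimf_cov yx); rewrite dx => -[].
have hyx : cov (h y) (h x) by rewrite hcov.
by rewrite (dimf_cov hyx) (IH y dy).
Qed.

Lemma iso_dimf h : iso h -> forall x, dimf (h x) = dimf x.
Proof. by move/iso_onto_dimf; apply; apply: closedT. Qed.

Lemma iso_onto_dim_le1 h B : iso_onto h B -> closed B -> dim_le1 Q -> dim_le1 P.
Proof. by move=> hh clB lQ x; rewrite -(iso_onto_dimf hh clB). Qed.

Lemma iso_onto_imsetT h B : iso_onto h B -> h @: setT = B.
Proof.
case=> _ hB onto _ _; apply/setP => y.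
by apply/imsetP/idP => [[x _ ->] // | /onto[x <-]]; exists x.
Qed.

Lemma iso_ogp_dim h : iso h -> ogp_dim Q = ogp_dim P.
Proof.
move=> hh; have [hinj _ _ _ _] := hh.
rewrite /ogp_dim /dimset -(iso_onto_imsetT hh) imset_eq0 big_imset /=; last first.
  by move=> x y _ _; apply: hinj.
by under eq_bigr => x _ do rewrite (iso_dimf hh).
Qed.

Lemma imset_Delta h B a n (S : {set P}) : iso_onto h B -> closed B ->
  h @: Delta a n S = Delta a n (h @: S).
Proof.
move=> hh clB; have [hinj _ _ hcov hori] := hh; have hdim := iso_onto_dimf hh clB.
apply/setP => z; apply/imsetP/idP => [[x + ->] | ].
- rewrite !inE => /and3P[xS dx /forallP nx]; rewrite imset_f //= hdim dx /=.
  apply/forall_inP => _ /imsetP[y yS ->]; rewrite hcov.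
  by have := nx y; rewrite yS /=; case: (boolP (cov x y)) => //= /hori ->.
- rewrite !inE => /and3P[/imsetP[x xS ->] dx /forallP nx]; exists x => //.
  rewrite inE xS -hdim dx /=; apply/forall_inP => y yS.
  by have := nx (h y); rewrite imset_f //= hcov; case: (boolP (cov x y)) => //= /hori ->.
Qed.

Lemma iso_onto_comp (R : ogp) (g : R -> P) h B :
  iso g -> iso_onto h B -> iso_onto (h \o g) B.
Proof.
case=> ginj _ gonto gcov gori [hinj hB honto hcov hori]; split.
- exact: inj_comp.
- by move=> x; apply: hB.
- by move=> y /honto[x <-]; have [z <-] := gonto x (in_setT x); exists z.
- by move=> x y /=; rewrite hcov gcov.
- by move=> x y xy /=; rewrite hori ?gcov // gori.
Qed.

Lemma iso_inverse h : iso h -> exists h' : Q -> P, [/\ cancel h h', cancel h' h & iso h'].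
Proof.
case=> hinj _ onto hcov hori.
have [h' hK'] : exists h' : Q -> P, cancel h' h.
  apply: (@fin_all_exists Q (fun _ => P) (fun y x => h x = y)) => y.
  exact: onto (in_setT y).
have hK : cancel h h' by move=> x; apply: hinj; rewrite hK'.
exists h'; split => //; split.
- exact: can_inj hK'.
- by move=> x; rewrite in_setT.
- by move=> x _; exists (h x).
- by move=> x y; rewrite -[in RHS](hK' x) -[in RHS](hK' y) hcov.
- by move=> x y xy; rewrite -[in RHS](hK' x) -[in RHS](hK' y) hori // -hcov !hK'.
Qed.

Lemma iso_imset_cl1 h x : iso h -> dim_le1 P -> dim_le1 Q -> h @: cl [set x] = cl [set h x].
Proof.
case=> hinj _ onto hcov _ lP lQ; rewrite !cl_set1; apply/setP => z.
rewrite inE dim_le1_leE //; apply/imsetP/idP => [[y] | ].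
  by rewrite inE dim_le1_leE // => yx ->; rewrite hcov (inj_eq hinj).
have [y <-] := onto z (in_setT z); rewrite hcov (inj_eq hinj) => yx.
by exists y; rewrite // inE dim_le1_leE.
Qed.

End Isomorphisms.

Definition is_map0 (P Q : ogp) (f : P -> Q) : Prop :=
  forall x a, f @: bd a 0 (cl [set x]) = bd a 0 (cl [set f x]).

Lemma inclusion_is_map0 (P Q : ogp) (f : P -> Q) : inclusion f -> is_map0 f.
Proof. by case=> hf _ x a; apply: hf. Qed.

Lemma is_map0_comp (P R Q : ogp) (g : P -> R) (f : R -> Q) :
  is_map0 g -> is_map0 f -> is_map0 (f \o g).
Proof. by move=> hg hf x a; rewrite imset_comp hg hf. Qed.

Lemma iso_is_map0 (P Q : ogp) (h : P -> Q) :
  iso h -> dim_le1 P -> dim_le1 Q -> is_map0 h.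
Proof.
by move=> hh lP lQ x a; rewrite !bd0E (imset_Delta _ _ _ hh) ?iso_imset_cl1 //; apply: closedT.
Qed.

(** * Chains *)

(* The chain with [m] edges: the vertices are the even numbers [0, 2, .., 2m]
   and the edge [2i+1] has input [2i] and output [2i+2]. *)
Definition chain_rel : rel nat := fun p q => odd q && ((p.+1 == q) || (q.+1 == p)).

Lemma chain_rel_subn c p q : ~~ odd c -> c <= p -> c <= q ->
  chain_rel (p - c) (q - c) = chain_rel p q.
Proof.
move=> ec cp cq; rewrite /chain_rel oddB // (negbTE ec) addbF.
by congr andb; lia.
Qed.

Lemma chain_rel_near c p q : ~~ odd c -> chain_rel p q ->
  (p <= c /\ q <= c) \/ (c <= p /\ c <= q).
Proof.
move=> ec /andP[oq pq]; have : q != c by apply: contraNneq ec => <-.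
lia.
Qed.

Section Chain.
Variable m : nat.

Definition chain_ori (p q : 'I_(2 * m).+1) : bool := q.+1 == p.
Definition chain_dimf (p : 'I_(2 * m).+1) : nat := odd p.

Lemma chain_dimf_cov (p q : 'I_(2 * m).+1) :
  chain_rel p q -> chain_dimf q = (chain_dimf p).+1.
Proof.
rewrite /chain_dimf => /andP[oq /orP[] /eqP e]; move: oq; rewrite -e /=.
  by case: (odd p).
by case: (odd q).
Qed.

Lemma chain_dimf_min (p : 'I_(2 * m).+1) :
  0 < chain_dimf p -> exists q : 'I_(2 * m).+1, chain_rel q p.
Proof.
rewrite lt0b => op; have p_gt0 : 0 < p by case: (nat_of_ord p) op.
have lt_p1 : p.-1 < (2 * m).+1 by rewrite (leq_ltn_trans (leq_pred p)).
by exists (Ordinal lt_p1); rewrite /chain_rel op prednK // eqxx.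
Qed.

Definition chain : ogp := @OGP 'I_(2 * m).+1 (fun p q => chain_rel p q)
  chain_ori chain_dimf chain_dimf_cov chain_dimf_min.

Implicit Types p q : chain.

Lemma chain_covE p q : cov p q = chain_rel p q.
Proof. by []. Qed.

Lemma chain_oriE p q : ori p q = (q.+1 == p).
Proof. by []. Qed.

Lemma chain_dimfE p : dimf p = odd p.
Proof. by []. Qed.

Lemma chain_dim_le1 : dim_le1 chain.
Proof. by move=> p; rewrite chain_dimfE leq_b1. Qed.

Lemma chain_leE p q : le p q = (p == q) || chain_rel p q.
Proof. exact: dim_le1_leE chain_dim_le1 p q. Qed.

Lemma chain_le p : p <= 2 * m.
Proof. by rewrite -ltnS. Qed.

Lemma chain_odd_lt p : odd p -> p < 2 * m.
Proof. by rewrite ltn_neqAle chain_le andbT; apply: contraTneq => ->; rewrite oddM. Qed.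

Lemma chain_inordK n : n <= 2 * m -> nat_of_ord (inord n : chain) = n.
Proof. by move=> ?; rewrite inordK. Qed.

Definition seg lo hi : {set chain} := [set q : chain | lo <= q <= hi].

Lemma seg_closed lo hi : ~~ odd lo -> ~~ odd hi -> closed (seg lo hi).
Proof.
move=> elo ehi p q; rewrite !inE chain_leE => /andP[loq qhi] /orP[/eqP -> | ].
  by rewrite loq qhi.
case/andP=> oq pq; have : q != lo :> nat by apply: contraNneq elo => <-.
have : q != hi :> nat by apply: contraNneq ehi => <-.
by move: pq loq qhi; case/orP => /eqP; lia.
Qed.

End Chain.

Section ChainBoundaries.
Variable m : nat.
Implicit Types p q : chain m.

Lemma bd0_seg a lo hi : ~~ odd lo -> ~~ odd hi -> lo <= hi <= 2 * m ->
  bd a 0 (seg m lo hi) = [set inord (if a then hi else lo)].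
Proof.
move=> elo ehi /andP[lohi him]; rewrite bd0E; apply/setP => q.
rewrite !inE -val_eqE /= inordK; last by case: a; lia.
have -> : (Posz (odd q) == 0%R) = ~~ odd q by case: odd.
apply/idP/eqP => [/and3P[/andP[loq qhi] evq /forall_inP no_cov] | qE].
  apply/eqP/negPn/negP => ne; case: a ne no_cov => ne no_cov.
    have q1 : q.+1 < (2 * m).+1 by lia.
    have := no_cov (Ordinal q1); rewrite inE /chain_rel /chain_ori /= evq eqxx.
    have -> : (q.+2 == q) = false by lia.
    by move/(_ ltac:(lia)).
  have q_gt0 : 0 < q by lia.
  have q1 : q.-1 < (2 * m).+1 by lia.
  have := no_cov (Ordinal q1); rewrite inE /chain_rel /chain_ori /= prednK //.
  rewrite -(prednK q_gt0) /= negbK in evq.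
  by rewrite evq eqxx orbT; move/(_ ltac:(lia)).
rewrite qE; case: a qE => qE; rewrite ?elo ?ehi lohi leqnn /=; apply/forall_inP => r;
  rewrite inE /chain_rel /chain_ori => rseg; apply/negP => /andP[/andP[_]];
  case/orP => /eqP; lia.
Qed.

Lemma bd0_chain a : bd a 0 [set: chain m] = [set inord (if a then 2 * m else 0)].
Proof.
have -> : [set: chain m] = seg m 0 (2 * m) by apply/setP => q; rewrite !inE chain_le.
by rewrite bd0_seg // ?oddM // leqnn.
Qed.

Lemma cl_chain p : cl [set p] = seg m (p - odd p) (p + odd p).
Proof.
rewrite cl_set1; apply/setP => q; rewrite !inE chain_leE -val_eqE /chain_rel /=.
by case: (odd p) => /=; lia.
Qed.

Lemma bd0_cl_chain a p :
  bd a 0 (cl [set p]) = [set inord (if a then p + odd p else p - odd p)].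
Proof.
have ple := chain_le p; have podd := @chain_odd_lt m p.
rewrite cl_chain bd0_seg //.
- by case: (boolP (odd p)) => op; rewrite ?subn0 ?op // oddB ?op //; lia.
- by rewrite oddD; case: odd.
- by case: (odd p) podd => /= h; lia.
Qed.

End ChainBoundaries.

Definition shift k m s (p : chain k) : chain m := inord (p + 2 * s).

Lemma shiftE k m s (p : chain k) : s + k <= m -> nat_of_ord (shift m s p) = p + 2 * s.
Proof. by move=> ?; rewrite inordK //; have := chain_le p; lia. Qed.

Lemma shift_iso_onto k m s :
  s + k <= m -> iso_onto (@shift k m s) (seg m (2 * s) (2 * (s + k))).
Proof.
move=> skm; split.
- by move=> p q /(congr1 val); rewrite /= !shiftE // => /addIn /val_inj.
- by move=> p; rewrite inE shiftE //; have := chain_le p; lia.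
- move=> q; rewrite inE => /andP[sq qk].
  have q_lt : q - 2 * s < (2 * k).+1 by lia.
  by exists (Ordinal q_lt); apply: val_inj; rewrite /= shiftE //=; lia.
- move=> p q; rewrite !chain_covE !shiftE // /chain_rel oddD oddM addbF.
  by congr andb; lia.
- by move=> p q _; rewrite !chain_oriE !shiftE //; lia.
Qed.

Lemma shift0_iso k : iso (@shift k k 0).
Proof.
rewrite /iso; have -> : [set: chain k] = seg k (2 * 0) (2 * (0 + k)).
  by apply/setP => q; rewrite !inE chain_le.
exact: shift_iso_onto.
Qed.

Lemma shift_comp k n m s (p : chain k) : k <= n -> s + n <= m ->
  shift m s (shift n 0 p) = shift m s p.
Proof. by move=> kn snm; apply: val_inj; rewrite /= !shiftE //; lia. Qed.

Lemma chain_dim m : ogp_dim (chain m) = (0 < m)%N.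
Proof.
case: m => [|m]; apply: ogp_dimE.
- by case=> -[].
- by exists ord0.
- exact: chain_dim_le1.
- have one_lt : 1 < (2 * m.+1).+1 by lia.
  by exists (Ordinal one_lt).
Qed.

Lemma paste_chain a b : is_paste 0 (@shift a (a + b) 0) (@shift b (a + b) a).
Proof.
exists (seg (a + b) (2 * 0) (2 * (0 + a))), (seg (a + b) (2 * a) (2 * (a + b))).
have even2 n : ~~ odd (2 * n) by rewrite oddM.
do 2 (split; first by apply: seg_closed).
split; first by apply/setP => q; rewrite !inE; have := chain_le q; lia.
rewrite !bd0_seg ?even2 //; try lia.
do 2 (split; first by apply/setP => q; rewrite !inE -val_eqE /= inordK; lia).
by split; apply: shift_iso_onto; lia.
Qed.

Lemma atom_chain1 : is_atom (@shift 0 1 0) (@shift 0 1 1).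
Proof.
have one_lt : 1 < (2 * 1).+1 by [].
exists (Ordinal one_lt), (seg 1 (2 * 0) (2 * (0 + 0))), (seg 1 (2 * 1) (2 * (1 + 0))).
rewrite chain_dim /bd2 !bd_neg //.
do 2 (split; first by apply: seg_closed).
split; first by apply/setP => -[[|[|[|q]]] ?]; rewrite !inE -?val_eqE.
split; first by apply/setP => q; rewrite !inE; lia.
do 2 (split; first by []).
do 2 (split; first by apply: shift_iso_onto).
split; first by case=> -[|[|[|q]]] ?; rewrite chain_covE -?val_eqE.
split; first by move=> p; rewrite inE chain_oriE /= => p0 _; apply/negbTE; lia.
split; first by move=> p; rewrite inE chain_oriE /= => p2 _; apply/eqP; lia.
by case=> -[|[|[|q]]] ?; rewrite chain_covE.
Qed.

Lemma round_chain0 : round (chain 0).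
Proof.
by move=> n; rewrite chain_dim /bd2 => n_lt0; rewrite !bd_neg ?setI0 ?setU0 //; lia.
Qed.

Lemma regmol_chain m : regmol (chain m).
Proof.
have chain0 : regmol (chain 0) by apply: rm_point; rewrite card_ord.
have chain1 : regmol (chain 1).
  exact: (rm_atom chain0 chain0 round_chain0 round_chain0 erefl atom_chain1).
elim: m => [// | [// | m] IH].
have := rm_paste IH chain1 _ _ (paste_chain m.+1 1).
by rewrite addn1 !chain_dim; apply.
Qed.

(** * Regular molecules of dimension at most one are chains *)

Lemma chain0_eq (p q : chain 0) : p = q.
Proof. by apply: val_inj; case: p q => -[|?] ? [[|?] ?]. Qed.

Lemma card1_chain0_iso (P : ogp) : #|P| = 1 -> exists g : chain 0 -> P, iso g.
Proof.
case/mem_card1 => x Px.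
have eqx (y : P) : y = x by apply/eqP; rewrite -[_ == _]/(y \in pred1 x) -Px.
exists (fun=> x); split.
- by move=> p q _; apply: chain0_eq.
- by move=> p; rewrite in_setT.
- by move=> y _; exists ord0; rewrite (eqx y).
- by move=> p q; rewrite (chain0_eq p q) !cov_irr.
- by move=> p q; rewrite (chain0_eq p q) cov_irr.
Qed.

Lemma chain1_iso (W : ogp) (p0 top p1 : W) :
  (forall w, [\/ w = p0, w = top | w = p1]) -> p0 != p1 ->
  dimf p0 = 0 -> dimf p1 = 0 -> cov p0 top -> cov p1 top ->
  ori p0 top = false -> ori p1 top = true -> exists g : chain 1 -> W, iso g.
Proof.
move=> cover p0p1 d0 d1 c0 c1 o0 o1.
have dt : dimf top = 1 by rewrite (dimf_cov c0) d0.
have p0t : p0 != top by apply: contraTneq c0 => ->; rewrite cov_irr.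
have p1t : p1 != top by apply: contraTneq c1 => ->; rewrite cov_irr.
pose g (p : chain 1) := match val p with 0 => p0 | 1 => top | _ => p1 end.
have gE (p : chain 1) :
    [\/ val p = 0 /\ g p = p0, val p = 1 /\ g p = top | val p = 2 /\ g p = p1].
  by case: p => -[|[|[|?]]] ? //; [constructor 1 | constructor 2 | constructor 3].
exists g; split.
- move=> p q; case: (gE p) (gE q) => -[vp ->] [] [vq ->] e; apply: val_inj;
    by rewrite vp vq //; move: p0t p1t p0p1; rewrite e !eqxx.
- by move=> y; rewrite in_setT.
- move=> y _; have one_lt : 1 < (2 * 1).+1 by [].
  by case: (cover y) => ->; [exists ord0 | exists (Ordinal one_lt) | exists ord_max].
- move=> p q; rewrite chain_covE /chain_rel.
  by case: (gE p) (gE q) => -[-> ->] [] [-> ->] //=; rewrite ?c0 ?c1 ?cov_dimf_neq ?d0 ?d1 ?dt.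
- move=> p q; rewrite chain_covE chain_oriE /chain_rel.
  by case: (gE p) (gE q) => -[-> ->] [] [-> ->].
Qed.

Section Glue.
Variables (W : ogp) (A B : {set W}) (a b : nat) (h1 : chain a -> W) (h2 : chain b -> W).
Hypotheses (clA : closed A) (clB : closed B) (AUB : A :|: B = [set: W])
  (iso1 : iso_onto h1 A) (iso2 : iso_onto h2 B)
  (AIB1 : A :&: B = [set h1 (inord (2 * a))]) (AIB2 : A :&: B = [set h2 (inord 0)]).

Let f1 (p : nat) := h1 (inord p).
Let f2 (p : nat) := h2 (inord p).

Let f1_inj p q : p <= 2 * a -> q <= 2 * a -> f1 p = f1 q -> p = q.
Proof.
by case: iso1 => inj1 _ _ _ _ pa qa /inj1 /(congr1 val); rewrite /= !chain_inordK.
Qed.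

Let f2_inj p q : p <= 2 * b -> q <= 2 * b -> f2 p = f2 q -> p = q.
Proof.
by case: iso2 => inj2 _ _ _ _ pb qb /inj2 /(congr1 val); rewrite /= !chain_inordK.
Qed.

Let f1_in_A p : f1 p \in A.
Proof. by case: iso1 => _ inA _ _ _; apply: inA. Qed.

Let f2_in_B p : f2 p \in B.
Proof. by case: iso2 => _ inB _ _ _; apply: inB. Qed.

Let f1_in_B p : p <= 2 * a -> f1 p \in B -> p = 2 * a.
Proof.
move=> pa pB; have : f1 p \in A :&: B by rewrite inE f1_in_A.
by rewrite AIB1 inE => /eqP/f1_inj; apply.
Qed.

Let f2_in_A q : q <= 2 * b -> f2 q \in A -> q = 0.
Proof.
move=> qb qA; have : f2 q \in A :&: B by rewrite inE f2_in_B andbT.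
by rewrite AIB2 inE => /eqP/f2_inj; apply.
Qed.

Let f1_f2 : f1 (2 * a) = f2 0.
Proof. by apply/set1P; rewrite -AIB2 AIB1 set11. Qed.

Let cov_f1 p q : p <= 2 * a -> q <= 2 * a -> cov (f1 p) (f1 q) = chain_rel p q.
Proof. by case: iso1 => _ _ _ cov1 _ pa qa; rewrite cov1 chain_covE !chain_inordK. Qed.

Let cov_f2 p q : p <= 2 * b -> q <= 2 * b -> cov (f2 p) (f2 q) = chain_rel p q.
Proof. by case: iso2 => _ _ _ cov2 _ pb qb; rewrite cov2 chain_covE !chain_inordK. Qed.

Let ori_f1 p q : p <= 2 * a -> q <= 2 * a -> chain_rel p q -> ori (f1 p) (f1 q) = (q.+1 == p).
Proof.
case: iso1 => _ _ _ _ ori1 pa qa pq.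
by rewrite ori1 ?chain_oriE ?chain_covE !chain_inordK.
Qed.

Let ori_f2 p q : p <= 2 * b -> q <= 2 * b -> chain_rel p q -> ori (f2 p) (f2 q) = (q.+1 == p).
Proof.
case: iso2 => _ _ _ _ ori2 pb qb pq.
by rewrite ori2 ?chain_oriE ?chain_covE !chain_inordK.
Qed.

Definition glue (p : chain (a + b)) : W :=
  if p <= 2 * a then f1 p else f2 (p - 2 * a).

Let glueE1 (p : chain (a + b)) : p <= 2 * a -> glue p = f1 p.
Proof. by rewrite /glue => ->. Qed.

Let glueE2 (p : chain (a + b)) : 2 * a <= p -> glue p = f2 (p - 2 * a).
Proof.
move=> ap; rewrite /glue; case: leqP => // pa.
have -> : nat_of_ord p = 2 * a by lia.
by rewrite f1_f2 subnn.
Qed.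

Let glue_inj : injective glue.
Proof.
move=> p q; have := chain_le p; have := chain_le q.
case: (leqP p (2 * a)) => pa; case: (leqP q (2 * a)) => qa qab pab.
- by rewrite !glueE1 // => /(f1_inj pa qa)/val_inj.
- rewrite glueE1 // glueE2 1?ltnW // => e.
  by have := @f2_in_A (q - 2 * a) ltac:(lia); rewrite -e f1_in_A; lia.
- rewrite glueE2 1?ltnW // glueE1 // => e.
  by have := @f2_in_A (p - 2 * a) ltac:(lia); rewrite e f1_in_A; lia.
- rewrite !glueE2 1?ltnW // => e; apply: val_inj => /=.
  by have := @f2_inj (p - 2 * a) (q - 2 * a) ltac:(lia) ltac:(lia) e; lia.
Qed.

Let glue_cov (p q : chain (a + b)) : cov (glue p) (glue q) = chain_rel p q.
Proof.
have := chain_le p; have := chain_le q => qab pab; have ea : ~~ odd (2 * a) by rewrite oddM.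
have [[pa qa] | [[ap aq] | [[pa aq] | [qa ap]]]] : (p <= 2 * a /\ q <= 2 * a) \/
    (2 * a <= p /\ 2 * a <= q) \/ (p < 2 * a /\ 2 * a < q) \/ (q < 2 * a /\ 2 * a < p).
  by lia.
- by rewrite !glueE1 // cov_f1.
- by rewrite !glueE2 // cov_f2 ?chain_rel_subn //; lia.
- rewrite glueE1 1?ltnW // glueE2 1?ltnW //; apply/idP/idP.
    by move/connect1/(clB (f2_in_B _))/f1_in_B; lia.
  by case/(chain_rel_near ea); lia.
- rewrite glueE2 1?ltnW // glueE1 1?ltnW //; apply/idP/idP.
    by move/connect1/(clA (f1_in_A _))/f2_in_A; lia.
  by case/(chain_rel_near ea); lia.
Qed.

Lemma glue_iso : iso glue.
Proof.
split.
- exact: glue_inj.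
- by move=> y; rewrite in_setT.
- move=> y _; have : y \in A :|: B by rewrite AUB.
  case: iso1 iso2 => _ _ onto1 _ _ [_ _ onto2 _ _].
  case/setUP => [/onto1[x <-] | /onto2[x <-]]; have := chain_le x => xle.
    have x_lt : x < (2 * (a + b)).+1 by lia.
    by exists (Ordinal x_lt); rewrite glueE1 // /f1 inord_val.
  have x_lt : x + 2 * a < (2 * (a + b)).+1 by lia.
  by exists (Ordinal x_lt); rewrite glueE2 /= ?leq_addl // addnK /f2 inord_val.
- exact: glue_cov.
- move=> p q; rewrite chain_covE chain_oriE => pq.
  have := chain_le p; have := chain_le q => qab pab; have ea : ~~ odd (2 * a) by rewrite oddM.
  case: (chain_rel_near ea pq) => [[pa qa] | [ap aq]].
    by rewrite !glueE1 // ori_f1.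
  by rewrite !glueE2 // ori_f2 ?chain_rel_subn //; lia.
Qed.

End Glue.

Lemma is_paste_dim_le1 k (U V W : ogp) (i : U -> W) (j : V -> W) :
  is_paste k i j -> dim_le1 W -> dim_le1 U /\ dim_le1 V.
Proof.
case=> [A [B [clA [clB [_ [_ [_ [isoA isoB]]]]]]]] lW.
by split; [apply: iso_onto_dim_le1 isoA clA lW | apply: iso_onto_dim_le1 isoB clB lW].
Qed.

Lemma is_atom_dim_le1 (U V W : ogp) (i : U -> W) (j : V -> W) :
  is_atom i j -> dim_le1 W -> dim_le1 U /\ dim_le1 V.
Proof.
case=> [top [A [B [clA [clB [_ [_ [_ [_ [isoA [isoB _]]]]]]]]]]] lW.
by split; [apply: iso_onto_dim_le1 isoA clA lW | apply: iso_onto_dim_le1 isoB clB lW].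
Qed.

Lemma paste_chain_iso (U V W : ogp) (i : U -> W) (j : V -> W) a b
    (g1 : chain a -> U) (g2 : chain b -> V) :
  iso g1 -> iso g2 -> is_paste 0 i j -> exists g : chain (a + b) -> W, iso g.
Proof.
move=> isog1 isog2 [A [B [clA [clB [AUB [AIB1 [AIB2 [isoA isoB]]]]]]]].
have iso1 := iso_onto_comp isog1 isoA; have iso2 := iso_onto_comp isog2 isoB.
have bd0_image a' n (h : chain n -> W) C : iso_onto h C -> closed C ->
    bd a' 0 C = [set h (inord (if a' then 2 * n else 0))].
  move=> isoh clC; rewrite -(iso_onto_imsetT isoh) bd0E -(imset_Delta _ _ _ isoh clC) -bd0E.
  by rewrite bd0_chain imset_set1.
exists (glue (i \o g1) (j \o g2)); apply: (glue_iso clA clB AUB iso1 iso2).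
- by rewrite AIB1 (bd0_image true _ _ _ iso1 clA).
- by rewrite AIB2 (bd0_image false _ _ _ iso2 clB).
Qed.

Lemma atom_chain_iso (U V W : ogp) (i : U -> W) (j : V -> W) a b
    (g1 : chain a -> U) (g2 : chain b -> V) :
  dim_le1 W -> iso g1 -> iso g2 -> ogp_dim U = ogp_dim V -> is_atom i j ->
  exists g : chain 1 -> W, iso g.
Proof.
move=> lW isog1 isog2 dimUV [top [A [B]]] /=.
case=> clA [clB [AUB [AIB [_ [_ [isoA [isoB [covtop [oriA [oriB _]]]]]]]]]].
have iso1 := iso_onto_comp isog1 isoA; have iso2 := iso_onto_comp isog2 isoB.
have [_ inA ontoA _ _] := isoA; have [_ inB ontoB _ _] := isoB.
have notop x : x \in A :|: B -> x != top by rewrite AUB !inE => /andP[].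
have AUB_A x : x \in A -> x \in A :|: B by rewrite inE => ->.
have AUB_B x : x \in B -> x \in A :|: B by rewrite inE orbC => ->.
have dimU : ogp_dim U = (0 < a)%N by rewrite (iso_ogp_dim isog1) chain_dim.
(* [top] covers the image of an element of dimension [dim U] and has dimension <= 1. *)
have a0 : a = 0.
  have [_ [u du]] := ogp_dimP dimU.
  have : cov (i u) top by rewrite covtop notop ?AUB_A // (iso_onto_dimf isoA clA) du dimU eqxx.
  move/dimf_cov => dtop; have := lW top.
  by rewrite dtop (iso_onto_dimf isoA clA) du; case: posnP.
have b0 : b = 0.
  by have := iso_ogp_dim isog2; rewrite -dimUV dimU chain_dim a0; case: b {g2 isog2 iso2}.
subst a b; set p0 := i (g1 ord0); set p1 := j (g2 ord0).
have [_ _ onto1 _ _] := isog1; have [_ _ onto2 _ _] := isog2.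
have A_p0 x : x \in A -> x = p0.
  by case/ontoA => y <-; have [z <-] := onto1 y (in_setT y); rewrite (chain0_eq z ord0).
have B_p1 x : x \in B -> x = p1.
  by case/ontoB => y <-; have [z <-] := onto2 y (in_setT y); rewrite (chain0_eq z ord0).
have dp0 : dimf p0 = 0 by rewrite (iso_onto_dimf iso1 clA).
have dp1 : dimf p1 = 0 by rewrite (iso_onto_dimf iso2 clB).
have p0A : p0 \in A by apply: inA.
have p1B : p1 \in B by apply: inB.
have c0 : cov p0 top by rewrite covtop dp0 dimU notop ?AUB_A.
have c1 : cov p1 top by rewrite covtop dp1 dimU notop ?AUB_B.
apply: (chain1_iso _ _ dp0 dp1 c0 c1).
- move=> w; case: (eqVneq w top) => [-> | /negbTE wtop]; first by constructor 2.
  have : w \in A :|: B by rewrite AUB !inE wtop.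
  by case/setUP => [/A_p0 -> | /B_p1 ->]; [constructor 1 | constructor 3].
- apply/eqP => p01; have : p0 \in A :&: B by rewrite inE p0A p01 p1B.
  by rewrite AIB /bd2 !bd_neg ?dimU // setU0 inE.
- exact: oriA p0A c0.
- exact: oriB p1B c1.
Qed.

Lemma regmol_dim_le1_chain_iso (P : ogp) :
  regmol P -> dim_le1 P -> exists m (g : chain m -> P), iso g.
Proof.
elim=> {P} [P /card1_chain0_iso [g isog] _ | P Q f _ IH isof lQ
  | U V W k i j _ IHU _ IHV kU _ pasteW lW | U V W i j _ IHU _ IHV _ _ dimUV atomW lW].
- by exists 0, g.
- have [m [g isog]] := IH (iso_onto_dim_le1 isof (@closedT Q) lQ).
  by exists m, (f \o g); apply: iso_onto_comp.
- have [lU lV] := is_paste_dim_le1 pasteW lW.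
  have [a [g1 isog1]] := IHU lU; have [b [g2 isog2]] := IHV lV.
  have k0 : k = 0 by have := ogp_dim_le lU; move: kU; lia.
  subst k; have [g isog] := paste_chain_iso isog1 isog2 pasteW.
  by exists (a + b), g.
- have [lU lV] := is_atom_dim_le1 atomW lW.
  have [a [g1 isog1]] := IHU lU; have [b [g2 isog2]] := IHV lV.
  have [g isog] := atom_chain_iso lW isog1 isog2 dimUV atomW.
  by exists 1, g.
Qed.

(** * Inclusions of chains are translations *)

Section ChainInclusion.
Variables (k m : nat) (G : chain k -> chain m).
Hypotheses (G_inj : injective G) (G_map0 : is_map0 G).

Lemma is_map0_chain a (p : chain k) :
  G (inord (if a then p + odd p else p - odd p)) =
  inord (if a then G p + odd (G p) else G p - odd (G p)).
Proof. by apply: set1_inj; rewrite -imset_set1 -!bd0_cl_chain G_map0. Qed.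

Let g n := nat_of_ord (G (inord n)).

Let g_edge q : q <= 2 * k -> odd q ->
  [/\ odd (g q), g q.-1 = (g q).-1 & g q.+1 = (g q).+1].
Proof.
(* If [G q] were a vertex, both endpoints of the edge [q] would be sent to it. *)
move=> qk oq; have := is_map0_chain false (inord q); have := is_map0_chain true (inord q).
rewrite /g inordK // oq addn1 subn1 /=; have := @chain_odd_lt m (G (inord q)).
case: (boolP (odd _)) => [oGq | eGq] Gqlt eS eP.
  by rewrite eS eP !inordK ?addn1 ?subn1 //; have := Gqlt isT; lia.
rewrite addn0 in eS; rewrite subn0 in eP.
by have /(congr1 val) := G_inj (etrans eS (esym eP)); rewrite /= !inordK //; lia.
Qed.

Let g_succ n : n < 2 * k -> g n.+1 = (g n).+1.
Proof.
move=> nk; case: (boolP (odd n)) => on; first by case: (g_edge (ltnW nk) on).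
have [og gpred _] := g_edge nk on.
by rewrite -[n in LHS]/(n.+1.-1) gpred; case: (g n.+1) og.
Qed.

Lemma chain_incl_shift : 0 < k -> exists s, s + k <= m /\ forall p, G p = p + 2 * s :> nat.
Proof.
move=> k_gt0.
have gE n : n <= 2 * k -> g n = g 0 + n.
  by elim: n => [|n IH] nk; rewrite ?addn0 // g_succ ?IH ?addnS //; lia.
have [og1 _ _] := @g_edge 1 ltac:(lia) isT.
have eg0 : ~~ odd (g 0) by move: og1; rewrite gE ?addn1 //=; lia.
exists (g 0)./2; split.
  have := chain_le (G (inord (2 * k))); rewrite -/(g (2 * k)) gE //.
  by have := odd_double_half (g 0); rewrite (negbTE eg0); lia.
move=> p; rewrite -[p in G p]inord_val -/(g p) gE ?chain_le //.
by have := odd_double_half (g 0); rewrite (negbTE eg0); lia.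
Qed.

End ChainInclusion.

Lemma sub_incl_shift_left k r : 0 < k -> sub_incl (@shift k (k + r) 0).
Proof.
move=> k_gt0; have [-> | r_gt0] := posnP r.
  by rewrite addn0; apply: si_iso (regmol_chain k) (regmol_chain k) (shift0_iso k).
apply: (si_left (regmol_chain k) (regmol_chain r) _ _ (paste_chain k r));
  by rewrite chain_dim ?k_gt0 ?r_gt0.
Qed.

Lemma sub_incl_shift_right s k : 0 < k -> sub_incl (@shift k (s + k) s).
Proof.
move=> k_gt0; have [-> | s_gt0] := posnP s.
  by rewrite add0n; apply: si_iso (regmol_chain k) (regmol_chain k) (shift0_iso k).
apply: (si_right (regmol_chain s) (regmol_chain k) _ _ (paste_chain s k));
  by rewrite chain_dim ?k_gt0 ?s_gt0.
Qed.

Lemma sub_incl_shift k m s : 0 < k -> s + k <= m -> sub_incl (@shift k m s).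
Proof.
move=> k_gt0 skm; have [r ->] : exists r, m = s + (k + r) by exists (m - s - k); lia.
have -> : @shift k (s + (k + r)) s = @shift (k + r) _ s \o @shift k (k + r) 0.
  by apply: functional_extensionality => p; rewrite /= shift_comp // leq_addr.
apply: si_comp (sub_incl_shift_left r k_gt0) (sub_incl_shift_right s _).
by rewrite addn_gt0 k_gt0.
Qed.

Theorem proposition4p3 (U V : ogp) (f : V -> U) :
  regmol V -> regmol U -> inclusion f ->
  ogp_dim V = 1%R -> ogp_dim U = 1%R -> sub_incl f.
Proof.
move=> rV rU incl_f dV dU.
have [lU _] := ogp_dimP dU; have [lV _] := ogp_dimP dV.
have [m [g isog]] := regmol_dim_le1_chain_iso rU lU.
have [k [h isoh]] := regmol_dim_le1_chain_iso rV lV.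
have [g' [_ g'K isog']] := iso_inverse isog; have [h' [hK h'K isoh']] := iso_inverse isoh.
have k_gt0 : 0 < k by have := iso_ogp_dim isoh; rewrite dV chain_dim; case: (0 < k).
pose G := g' \o f \o h.
have G_inj : injective G.
  by apply: inj_comp (inj_comp (can_inj g'K) _) (can_inj hK); case: incl_f.
have G_map0 : is_map0 G.
  apply: is_map0_comp (iso_is_map0 isoh (@chain_dim_le1 k) lV) _.
  exact: is_map0_comp (inclusion_is_map0 incl_f) (iso_is_map0 isog' lU (@chain_dim_le1 m)).
have [s [skm GE]] := chain_incl_shift G_inj G_map0 k_gt0.
have -> : f = g \o (shift m s \o h').
  apply: functional_extensionality => x /=.
  have -> : shift m s (h' x) = G (h' x) by apply: val_inj; rewrite /= shiftE // GE.
  by rewrite /G /= h'K g'K.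
apply: si_comp (si_iso (regmol_chain m) rU isog).
exact: si_comp (si_iso rV (regmol_chain k) isoh') (sub_incl_shift k_gt0 skm).
Qed.
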